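(* Let $n\ge2$, $\alpha\in\mathbb C$, and $T=I+\alpha D\in\mathcal L(\mathcal P_n)$. Let $f\in\mathcal P_n$ have degree at least $2$ and simple roots, and suppose $\tau(f)>2|\alpha|(n-1)+1$. Then $$Z(Tf)\subset\{-\alpha\}+Z(f)+\mathbb D\bigl(\gamma_\alpha/\tau(f)\bigr),$$ where $$\gamma_\alpha=2n\bigl(|\alpha|(n-1)+1\bigr)\left(\Bigl(\frac{|\alpha|(n-1)+2}{|\alpha|(n-1)+1}\Bigr)^{n-1}-1\right)\max\Bigl\{|\alpha|^k\Bigl(1-\frac1k\Bigr):k=2,\dots,n\Bigr\}.$$
   Context: $\mathcal P_n$ is the complex vector space of polynomials of degree at most $n$, $D$ the differentiation operator, $I$ the identity. $Z(f)$ is the root set of $f$; $\mathbb D(r)=\{z\in\mathbb C:|z|\le r\}$ and $A+B=\{u+v:u\in A,v\in B\}$. For $f$ of degree $\ge2$ with at least two distinct roots, $\tau(f):=\min\{|w-v|:w\in Z(f),\ v\in Z(f')\setminus\{w\}\}$. *)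

From HB Require Import structures.
From mathcomp Require Import all_boot all_order all_algebra.
Set Implicit Arguments. Unset Strict Implicit. Unset Printing Implicit Defensive.
Import Order.TTheory GRing.Theory Num.Theory.
Local Open Scope ring_scope.

Definition simple_roots (C : numClosedFieldType) (f : {poly C}) : Prop :=
  forall z, root f z -> ~~ root f^`() z.

Definition is_tau (C : numClosedFieldType) (f : {poly C}) (t : C) : Prop :=
  (exists w v, [/\ root f w, root f^`() v, v != w & t = `|w - v|]) /\
  (forall w v, root f w -> root f^`() v -> v != w -> t <= `|w - v|).

Definition Top (C : numClosedFieldType) (alpha : C) (f : {poly C}) : {poly C} :=
  f + alpha *: f^`().

Definition gamma (C : numClosedFieldType) (n : nat) (alpha : C) : C :=
  let a := `|alpha| in
  let A := a * (n.-1)%:R + 1 in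
  2 * n%:R * A * (((A + 1) / A) ^+ n.-1 - 1) *
  \big[Order.max/0]_(2 <= k < n.+1) (a ^+ k * (1 - (k%:R)^-1)).

From HB Require Import structures.
From mathcomp Require Import all_boot all_order all_algebra ring zify.
Set Implicit Arguments.
Unset Strict Implicit.
Unset Printing Implicit Defensive.
Import Order.TTheory GRing.Theory Num.Theory.
Local Open Scope ring_scope.

(* Let z be a root of T f, put u = z + alpha, and let w0 be the root of f
   nearest to u, at distance dl.  Writing F(X) = f(X + u), the equation
   T f(z) = 0 reads F(-alpha) + alpha F'(-alpha) = 0, which bounds
   |F_0| = |f(u)| by the higher Taylor coefficients F_k (Top_root_coef_bound).
   These are controlled by the Cauchy-type estimate shifted_coef_bound:
   |F_k| r^k <= |F_0| binom(deg, k) whenever all roots are >= r away from u.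
   1. With r = dl this gives dl <= (n - 1)|alpha| (root_free_radius_bound).
   2. Since the roots are simple, every critical point v differs from w0, so
      |u - v| >= tau - dl; applying the same estimate to f' at u bounds
      |F_0| by |F_1| = |f'(u)| and yields dl <= deg f * M * ((1 + 1/rho)^N - 1)
      with rho = tau - dl (root_distance_via_critical).
   3. An elementary binomial inequality (binomial_tail_bound) turns this into
      dl <= gamma_alpha / tau (distance_le_gamma), which is the corollary. *)

Lemma coef_prod_XaddC_bound (R : numDomainType) (I : eqType) (s : seq I)
    (g : I -> R) (r : R) :
  0 < r -> (forall w, w \in s -> r <= `|g w|) -> forall i,
  `|(\prod_(w <- s) ('X + (g w)%:P))`_i| * r ^+ i <=
     (\prod_(w <- s) `|g w|) * ('C(size s, i))%:R.
Proof.
move=> r_gt0; have r_ge0 := ltW r_gt0.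
elim: s => [|w s IH] g_ge i.
  rewrite !big_nil coefC /= bin0n; case: i => [|i] /=.
    by rewrite expr0 normr1 !mulr1.
  by rewrite normr0 !mul0r mulr0.
have {}IH := IH (fun x xs => g_ge x (mem_behead (xs : x \in behead (w :: s)))).
have gw_ge : r <= `|g w| by apply: g_ge; rewrite mem_head.
rewrite !big_cons mulrDl coefD coefXM coefCM.
case: i => [|i] /=.
  rewrite bin0 expr0 !mulr1 add0r normrM ler_wpM2l //.
  by have := IH 0%N; rewrite expr0 bin0 !mulr1.
rewrite binS natrD mulrDr.
set Q := \prod_(j <- s) `|g j|.
apply: le_trans (ler_wpM2r (exprn_ge0 _ r_ge0) (ler_normD _ _)) _.
rewrite mulrDl addrC; apply: lerD.
  by rewrite normrM -!mulrA ler_wpM2l //; apply: IH.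
apply: (@le_trans _ _ ((Q * 'C(size s, i)%:R) * r)).
  by rewrite exprSr mulrA; apply: ler_wpM2r => //; apply: IH.
rewrite [X in X <= _]mulrC -!mulrA ler_wpM2r //.
by apply: mulr_ge0; [exact: prodr_ge0 | exact: ler0n].
Qed.

Lemma comp_prod_XsubC_shift (R : comNzRingType) (s : seq R) (u : R) :
  (\prod_(w <- s) ('X - w%:P)) \Po ('X + u%:P) =
  \prod_(w <- s) ('X + (u - w)%:P).
Proof.
elim: s => [|w s IH]; first by rewrite !big_nil -polyC1 comp_polyC.
rewrite !big_cons comp_polyM IH comp_polyB comp_polyX comp_polyC.
by rewrite polyCB addrA.
Qed.

Lemma far_from_roots_nonroot (C : numClosedFieldType) (p : {poly C})
    (u r : C) :
  0 < r -> (forall w, root p w -> r <= `|u - w|) -> 0 < `|p.[u]|.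
Proof.
move=> r_gt0 far; rewrite normr_gt0; apply/negP => pu0.
by have := far u pu0; rewrite subrr normr0 => /(lt_le_trans r_gt0); rewrite ltxx.
Qed.

Lemma shifted_coef_bound (C : numClosedFieldType) (p : {poly C}) (u r : C) :
  0 < r -> (forall w, root p w -> r <= `|u - w|) -> forall k,
  `|(p \Po ('X + u%:P))`_k| * r ^+ k <= `|p.[u]| * ('C((size p).-1, k))%:R.
Proof.
move=> r_gt0 far k.
have [p0|p_neq0] := eqVneq p 0.
  by have := far_from_roots_nonroot r_gt0 far; rewrite p0 horner0 normr0 ltxx.
have [ws def_p] := closed_field_poly_normal p.
have lc_neq0 : lead_coef p != 0 by rewrite lead_coef_eq0.
have root_p w : root p w = (w \in ws) by rewrite def_p rootZ // root_prod_XsubC.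
have -> : (size p).-1 = size ws by rewrite def_p size_scale // size_prod_XsubC.
rewrite [in X in X <= _]def_p comp_polyZ comp_prod_XsubC_shift coefZ normrM -mulrA.
rewrite [in X in _ <= X]def_p hornerZ horner_prod normrM normr_prod -mulrA.
rewrite ler_wpM2l //.
under [in X in _ <= X]eq_bigr do rewrite hornerXsubC.
by apply: coef_prod_XaddC_bound => // w; rewrite -root_p; apply: far.
Qed.

Lemma Top_root_coef_identity (R : comNzRingType) (F : {poly R}) (alpha : R)
    (d : nat) :
  (size F <= d.+1)%N -> F.[- alpha] + alpha * F^`().[- alpha] = 0 ->
  F`_0 = \sum_(i < d) i%:R * F`_i.+1 * (- alpha) ^+ i.+1.
Proof.
move=> szF /eqP; rewrite addr_eq0 => /eqP TF0.
have szF' : (size F^`() <= d)%N.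
  apply/leq_sizeP => j le_dj; rewrite coef_deriv.
  by move/leq_sizeP: szF => ->; rewrite ?mul0rn.
move: TF0; rewrite (horner_coef_wide _ szF) (horner_coef_wide _ szF').
rewrite big_ord_recl expr0 mulr1 mulr_sumr -sumrN => /(canRL (addrK _)) ->.
rewrite -sumrB; apply: eq_bigr => i _.
rewrite coef_deriv mulrSr -mulr_natr exprS /=; ring.
Qed.

Lemma Top_root_coef_bound (C : numClosedFieldType) (alpha u : C)
    (f : {poly C}) (d : nat) :
  (size f <= d.+1)%N -> root (Top alpha f) (u - alpha) ->
  `|f.[u]| <= \sum_(i < d)
                i%:R * `|(f \Po ('X + u%:P))`_i.+1| * `|alpha| ^+ i.+1.
Proof.
move=> szf Tf0; set F := f \Po ('X + u%:P).
have F0 : F`_0 = f.[u].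
  by rewrite -horner_coef0 horner_comp hornerD hornerX hornerC add0r.
have szF : (size F <= d.+1)%N by rewrite size_comp_poly2 ?size_XaddC.
have shift (p : {poly C}) x : (p \Po ('X + u%:P)).[x] = p.[x + u].
  by rewrite horner_comp hornerD hornerX hornerC.
have TF0 : F.[- alpha] + alpha * F^`().[- alpha] = 0.
  move: Tf0; rewrite /root /Top hornerD hornerZ => /eqP.
  rewrite /F deriv_comp derivD derivX derivC addr0 mulr1 !shift.
  by rewrite [- alpha + u]addrC.
rewrite -F0 (Top_root_coef_identity szF TF0).
apply: le_trans (ler_norm_sum _ _ _) _; apply: ler_sum => i _.
by rewrite !normrM normrX normrN normr_nat.
Qed.

Lemma exprD1n_sub1 (R : comNzRingType) (N : nat) (x : R) :
  (x + 1) ^+ N - 1 = \sum_(i < N) ('C(N, i.+1))%:R * x ^+ i.+1.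
Proof.
rewrite exprD1n big_ord_recl /= expr0 bin0 mulr1n addrC addKr.
by apply: eq_bigr => i _; rewrite mulr_natl.
Qed.

Lemma binomial_weighted_sum (R : comNzRingType) (d : nat) (x : R) :
  \sum_(i < d.+1) i%:R * ('C(d.+1, i.+1))%:R * x ^+ i.+1 =
  1 + (x + 1) ^+ d * (d%:R * x - 1).
Proof.
have weight (i : nat) : i%:R * ('C(d.+1, i.+1))%:R =
    d.+1%:R * ('C(d, i))%:R - ('C(d.+1, i.+1))%:R :> R.
  rewrite -natrM -[in RHS]natrM.
  have := mul_bin_diag d.+1 i => /= ->.
  by rewrite mulSn natrD addrAC subrr add0r.
under eq_bigr do rewrite weight mulrBl.
rewrite sumrB.
have -> : \sum_(i < d.+1) d.+1%:R * ('C(d, i))%:R * x ^+ i.+1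
          = d.+1%:R * x * (x + 1) ^+ d.
  rewrite exprD1n mulr_sumr; apply: eq_bigr => i _.
  by rewrite exprS -mulr_natr; ring.
by rewrite -exprD1n_sub1 exprS -natr1; ring.
Qed.

Lemma binomial_weighted_sum_ge1 (R : numDomainType) (d : nat) (x : R) :
  0 <= x ->
  1 <= \sum_(i < d.+1) i%:R * ('C(d.+1, i.+1))%:R * x ^+ i.+1 ->
  1 <= d%:R * x.
Proof.
move=> x_ge0; rewrite binomial_weighted_sum => sum_ge1.
have dx_real : d%:R * x \is Num.real by rewrite realM ?realn ?ger0_real.
rewrite real_leNgt ?real1 //; apply/negP => dx_lt1.
have pow_gt0 : 0 < (x + 1) ^+ d by apply: exprn_gt0; apply: ltr_wpDl.
have : (x + 1) ^+ d * (d%:R * x - 1) < 0 by rewrite pmulr_rlt0 // subr_lt0.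
rewrite -(ltrD2l 1) addr0 => /(le_lt_trans sum_ge1).
by rewrite ltxx.
Qed.

Lemma root_free_radius_bound (C : numClosedFieldType) (alpha u r : C)
    (f : {poly C}) :
  0 < r -> (forall w, root f w -> r <= `|u - w|) ->
  root (Top alpha f) (u - alpha) -> r <= (size f).-2%:R * `|alpha|.
Proof.
move=> r_gt0 far Tf0.
have fu_gt0 := far_from_roots_nonroot r_gt0 far.
have coef_le := shifted_coef_bound r_gt0 far.
have Tf_bound := Top_root_coef_bound (leqSpred (size f)) Tf0.
have sum_ge1 : 1 <= \sum_(i < (size f).-1)
                      i%:R * ('C((size f).-1, i.+1))%:R * (`|alpha| / r) ^+ i.+1.
  rewrite -(ler_pM2l fu_gt0) mulr1 mulr_sumr; apply: le_trans Tf_bound _.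
  apply: ler_sum => i _; rewrite mulrCA -!mulrA ler_wpM2l //.
  rewrite expr_div_n mulrA [_ ^+ _ / _]mulrC mulrA ler_wpM2r ?exprn_ge0 //.
  by rewrite ler_pdivlMr ?exprn_gt0 // [X in _ <= X]mulrC coef_le.
move: sum_ge1; case: (size f).-1 => [|d]; first by rewrite big_ord0 ler10.
move=> /(binomial_weighted_sum_ge1 (divr_ge0 (normr_ge0 _) (ltW r_gt0))).
by rewrite mulrA ler_pdivlMr // mul1r.
Qed.

Lemma size_deriv_le (R : nzRingType) (p : {poly R}) :
  (size p^`() <= (size p).-1)%N.
Proof.
have [->|p_neq0] := eqVneq p 0; first by rewrite deriv0 size_poly0.
by rewrite -ltnS prednK ?lt_size_deriv // size_poly_gt0.
Qed.

Lemma root_distance_via_critical (C : numClosedFieldType)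
    (alpha u dl rho M : C) (f : {poly C}) (n : nat) :
  (0 < n)%N -> (size f <= n.+1)%N -> 0 <= M ->
  (forall k, (2 <= k <= n)%N -> `|alpha| ^+ k * (1 - k%:R^-1) <= M) ->
  0 < dl -> (forall w, root f w -> dl <= `|u - w|) ->
  0 < rho -> (forall v, root f^`() v -> rho <= `|u - v|) ->
  root (Top alpha f) (u - alpha) ->
  dl <= (size f).-1%:R * (M * ((rho^-1 + 1) ^+ n.-1 - 1)).
Proof.
case: n => // N _ szf M_ge0 M_ub dl_gt0 far_roots rho_gt0 far_crit Tf0 /=.
set F := f \Po ('X + u%:P); set S := (rho^-1 + 1) ^+ N - 1.
have fu_gt0 := far_from_roots_nonroot dl_gt0 far_roots.
have F1_le : `|F`_1| * dl <= `|f.[u]| * (size f).-1%:R.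
  by have := shifted_coef_bound dl_gt0 far_roots 1; rewrite expr1 bin1.
have dF : F^`() = f^`() \Po ('X + u%:P).
  by rewrite deriv_comp derivD derivX derivC addr0 mulr1.
have f'u : f^`().[u] = F`_1.
  by rewrite -[F`_1]mulr1n -coef_deriv dF -horner_coef0 horner_comp
       hornerD hornerX hornerC add0r.
have F'_le j : `|F^`()`_j| <= `|F`_1| * ('C(N, j))%:R / rho ^+ j.
  rewrite ler_pdivlMr ?exprn_gt0 // dF -f'u.
  apply: le_trans (shifted_coef_bound rho_gt0 far_crit j) _.
  rewrite ler_wpM2l // ler_nat leq_bin2l //.
  by move: (size_deriv_le f) szf; set sf' := size _; set sf := size _; lia.
have term_le (i : 'I_N) :
    i.+1%:R * `|F`_i.+2| * `|alpha| ^+ i.+2 <=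
    M * (`|F`_1| * ('C(N, i.+1))%:R / rho ^+ i.+1).
  have weight : i.+1%:R * `|F`_i.+2| =
      (1 - i.+2%:R^-1) * `|F^`()`_i.+1| :> C.
    rewrite coef_deriv normrMn -[_ *+ i.+2]mulr_natr -natr1.
    by field; rewrite -natrD pnatr_eq0.
  rewrite weight mulrAC [_ * `|alpha| ^+ _]mulrC.
  apply: le_trans (ler_wpM2l M_ge0 (F'_le _)).
  by rewrite ler_wpM2r // M_ub //= ltnS; exact: ltn_ord.
have fu_le : `|f.[u]| <= `|F`_1| * (M * S).
  apply: le_trans (Top_root_coef_bound szf Tf0) _.
  rewrite big_ord_recl mul0r mul0r add0r.
  rewrite /S exprD1n_sub1 !mulr_sumr; apply: ler_sum => i _.
  have -> : (lift ord0 i : nat) = i.+1 by [].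
  apply: le_trans (term_le i) _.
  by rewrite exprVn !mulrA [M * _]mulrC.
have S_ge0 : 0 <= S.
  by rewrite subr_ge0 exprn_ege1 // lerDr invr_ge0 ltW.
rewrite -(ler_pM2l fu_gt0); apply: le_trans (ler_wpM2r (ltW dl_gt0) fu_le) _.
rewrite mulrAC [X in _ <= X]mulrA.
by apply: ler_wpM2r F1_le; apply: mulr_ge0.
Qed.

Lemma exists_nearest (R : numDomainType) (s : seq R) (u : R) : s != [::] ->
  exists2 w, w \in s & forall y, y \in s -> `|u - w| <= `|u - y|.
Proof.
elim: s => [//|x s IH] _.
have [->|s_neq0] := eqVneq s [::].
  by exists x; rewrite ?mem_head // => y; rewrite inE => /eqP ->.
have [w ws w_min] := IH s_neq0.
have [le_xw|lt_wx] := real_leP (normr_real (u - x)) (normr_real (u - w)).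
  exists x; first by rewrite mem_head.
  move=> y; rewrite inE => /orP [/eqP ->//|ys].
  exact: le_trans le_xw (w_min y ys).
exists w; first by rewrite inE ws orbT.
by move=> y; rewrite inE => /orP [/eqP ->|ys]; [exact: ltW | exact: w_min].
Qed.

Lemma exists_nearest_root (C : numClosedFieldType) (f : {poly C}) (u : C) :
  (1 < size f)%N ->
  exists2 w, root f w & forall w', root f w' -> `|u - w| <= `|u - w'|.
Proof.
move=> szf; have f_neq0 : f != 0 by rewrite -size_poly_gt0 ltnW.
have [ws def_f] := closed_field_poly_normal f.
have root_f w : root f w = (w \in ws).
  by rewrite def_f rootZ ?lead_coef_eq0 // root_prod_XsubC.
have ws_neq0 : ws != [::].
  apply: contraTneq szf => ws0.
  by rewrite def_f ws0 big_nil size_scale ?lead_coef_eq0 // size_poly1.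
have [w ws_w w_min] := exists_nearest u ws_neq0.
by exists w => [|w']; rewrite root_f // => /w_min.
Qed.

Lemma critical_point_gap (C : numClosedFieldType) (f : {poly C})
    (t u w0 : C) :
  simple_roots f -> is_tau f t -> root f w0 ->
  forall v, root f^`() v -> t - `|u - w0| <= `|u - v|.
Proof.
move=> simple [_ tau_min] root_w0 v root_v.
have v_neq : v != w0.
  by apply: contraTneq root_v => ->; exact: simple.
rewrite lerBlDl; apply: le_trans (tau_min _ _ root_w0 root_v v_neq) _.
by rewrite (distrC u w0) ler_distD.
Qed.

Lemma bigmax_nonneg_ub (R : numDomainType) (I : eqType) (r : seq I)
    (F : I -> R) :
  (forall k, 0 <= F k) ->
  0 <= \big[Order.max/0]_(k <- r) F k /\
  forall k, k \in r -> F k <= \big[Order.max/0]_(k <- r) F k.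
Proof.
move=> F_ge0; elim: r => [|x r [IH_ge0 IH_ub]]; first by rewrite big_nil.
rewrite big_cons.
have cmp : (F x >=< \big[Order.max/0]_(k <- r) F k)%O.
  by apply: real_comparable; apply: ger0_real.
split; first by rewrite comparable_le_max // F_ge0.
move=> k; rewrite inE => /orP [/eqP ->|kr].
  by rewrite comparable_le_max // lexx.
by rewrite comparable_le_max // IH_ub ?orbT.
Qed.

Definition gamma_max (C : numClosedFieldType) (n : nat) (alpha : C) : C :=
  \big[Order.max/0]_(2 <= k < n.+1) (`|alpha| ^+ k * (1 - (k%:R)^-1)).

Lemma gammaE (C : numClosedFieldType) (n : nat) (alpha : C) :
  let A := `|alpha| * (n.-1)%:R + 1 in
  gamma n alpha = n%:R * gamma_max n alpha * (2 * A * (((A + 1) / A) ^+ n.-1 - 1)).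
Proof. by rewrite /gamma /gamma_max /=; ring. Qed.

Lemma gamma_max_ub (C : numClosedFieldType) (n : nat) (alpha : C) :
  0 <= gamma_max n alpha /\
  forall k, (2 <= k <= n)%N -> `|alpha| ^+ k * (1 - k%:R^-1) <= gamma_max n alpha.
Proof.
have weight_ge0 (k : nat) : 0 <= `|alpha| ^+ k * (1 - (k%:R)^-1).
  rewrite mulr_ge0 ?exprn_ge0 //; case: k => [|k]; first by rewrite invr0 subr0.
  by rewrite subr_ge0 invf_le1 ?ltr0Sn // ler1n.
have [M_ge0 M_ub] := bigmax_nonneg_ub (index_iota 2 n.+1) weight_ge0.
by split => // k k_range; apply: M_ub; rewrite mem_index_iota ltnS.
Qed.

Lemma tau_gap_gt0 (R : numDomainType) (N : nat) (a t dl : R) :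
  0 <= a -> 2 * a * N%:R + 1 < t -> dl <= N%:R * a -> 0 < t - dl.
Proof.
move=> a_ge0 t_gt dl_le; rewrite subr_gt0; apply: le_lt_trans t_gt.
rewrite (_ : 2 * a * N%:R + 1 = N%:R * a + (N%:R * a + 1)); last by ring.
by apply: le_trans dl_le _; rewrite lerDl addr_ge0 ?mulr_ge0.
Qed.

Lemma binomial_tail_bound (R : numFieldType) (N : nat) (a t r : R) :
  0 <= a -> 2 * a * N%:R + 1 < t -> t - N%:R * a <= r ->
  t * ((r^-1 + 1) ^+ N - 1) <=
    2 * (a * N%:R + 1) * ((((a * N%:R + 1) + 1) / (a * N%:R + 1)) ^+ N - 1).
Proof.
move=> a_ge0 t_gt r_ge; set A := a * N%:R + 1.
have A_ge1 : 1 <= A by rewrite lerDr mulr_ge0.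
have A_gt0 : 0 < A by apply: lt_le_trans A_ge1.
have A_le_r : A <= r.
  apply: le_trans r_ge; rewrite lerBrDr; apply: ltW; apply: le_lt_trans t_gt.
  by rewrite /A [N%:R * a]mulrC addrAC -mulr2n -mulrA mulr_natl.
have r_gt0 : 0 < r by apply: lt_le_trans A_le_r.
have t_le : t <= 2 * r.
  apply: le_trans (ler_wpM2l (ler0n _ 2) r_ge).
  rewrite mulrBr lerBrDr (mulr_natl t 2) mulr2n lerD2l.
  apply: ltW; apply: le_lt_trans t_gt.
  by rewrite ler_wpDr // -mulrA [N%:R * a]mulrC.
have -> : (A + 1) / A = A^-1 + 1 by rewrite mulrDl divff ?gt_eqF // mul1r addrC.
rewrite !exprD1n_sub1 !mulr_sumr; apply: ler_sum => i _.
set c : R := ('C(N, i.+1))%:R.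
apply: le_trans (ler_wpM2r _ t_le) _.
  by rewrite mulr_ge0 ?ler0n ?exprn_ge0 ?invr_ge0 ?ltW.
have cancel_one (y : R) : y != 0 ->
    2 * y * (c * y^-1 ^+ i.+1) = 2 * c * y^-1 ^+ i.
  by move=> y_neq0; rewrite exprS [c * _]mulrCA -mulrA mulVKf // mulrA.
rewrite !cancel_one ?gt_eqF // ler_wpM2l ?mulr_ge0 ?ler0n // !exprVn.
by rewrite lef_pV2 ?posrE ?exprn_gt0 // lerXn2r // nnegrE ltW.
Qed.

Lemma gamma_ge0 (C : numClosedFieldType) (n : nat) (alpha : C) :
  0 <= gamma n alpha.
Proof.
have [M_ge0 _] := gamma_max_ub n alpha.
have A_gt0 : 0 < `|alpha| * (n.-1)%:R + 1 by rewrite ltr_wpDl ?mulr_ge0.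
rewrite gammaE; apply: mulr_ge0; first by rewrite mulr_ge0.
rewrite !mulr_ge0 ?ler0n ?(ltW A_gt0) // subr_ge0 exprn_ege1 //.
by rewrite ler_pdivlMr // mul1r lerDl.
Qed.

Lemma distance_le_gamma (C : numClosedFieldType) (n d : nat) (alpha t dl : C) :
  2 * `|alpha| * (n.-1)%:R + 1 < t -> dl <= (n.-1)%:R * `|alpha| ->
  dl <= d%:R * (gamma_max n alpha * (((t - dl)^-1 + 1) ^+ n.-1 - 1)) ->
  (d <= n)%N -> dl <= gamma n alpha / t.
Proof.
move=> t_gt dl_le dist_le d_le_n.
have a_ge0 : 0 <= `|alpha| := normr_ge0 alpha.
have rho_gt0 := tau_gap_gt0 a_ge0 t_gt dl_le.
have t_gt0 : 0 < t by apply: lt_trans t_gt; rewrite ltr_wpDl ?mulr_ge0.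
have [M_ge0 _] := gamma_max_ub n alpha.
have tail_le := binomial_tail_bound a_ge0 t_gt (lerB (lexx t) dl_le).
set S := (_^-1 + 1) ^+ _ - 1 in dist_le tail_le.
have S_ge0 : 0 <= S by rewrite subr_ge0 exprn_ege1 // lerDr invr_ge0 ltW.
rewrite ler_pdivlMr // gammaE; apply: le_trans (ler_wpM2r (ltW t_gt0) dist_le) _.
rewrite (_ : _ * (_ * S) * t = d%:R * gamma_max n alpha * (t * S)); last by ring.
apply: le_trans (ler_wpM2l _ tail_le); last by rewrite mulr_ge0.
by rewrite ler_wpM2r ?mulr_ge0 ?(ltW t_gt0) // ler_wpM2r // ler_nat.
Qed.

Theorem corollary3p3 (C : numClosedFieldType) (n : nat) (alpha : C)
  (f : {poly C}) (t : C) :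
  (2 <= n)%N ->
  (size f <= n.+1)%N ->
  (3 <= size f)%N ->
  simple_roots f ->
  is_tau f t ->
  2 * `|alpha| * (n.-1)%:R + 1 < t ->
  forall z, root (Top alpha f) z ->
    exists w, root f w /\ `|z - (- alpha + w)| <= gamma n alpha / t.
Proof.
move=> n_ge2 szf szf_ge3 simple tau t_gt z Tz.
set u := z + alpha; have z_eq : z = u - alpha by rewrite addrK.
rewrite z_eq in Tz *.
have [w0 root_w0 nearest] := exists_nearest_root u (ltnW szf_ge3).
exists w0; split => //.
rewrite (_ : u - alpha - (- alpha + w0) = u - w0); last by ring.
have := normr_ge0 (u - w0); rewrite le0r => /orP [/eqP -> | dl_gt0].
  by rewrite divr_ge0 ?gamma_ge0 // ltW // (lt_trans _ t_gt) // ltr_wpDl ?mulr_ge0.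
have dl_le : `|u - w0| <= (n.-1)%:R * `|alpha|.
  apply: le_trans (root_free_radius_bound dl_gt0 nearest Tz) _.
  by rewrite ler_wpM2r // ler_nat; move: szf; set sf := size f; lia.
have [M_ge0 M_ub] := gamma_max_ub n alpha.
apply: (distance_le_gamma t_gt dl_le).
  apply: (root_distance_via_critical (ltnW n_ge2) szf M_ge0 M_ub dl_gt0 nearest
    _ (critical_point_gap u simple tau root_w0) Tz).
  exact: (tau_gap_gt0 (normr_ge0 _) t_gt dl_le).
by move: szf; set sf := size f; lia.
Qed.
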